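(* Let $G$ be a finite simple graph of order $n$ with minimum degree $\delta$. If $\delta\geq 1$ and $\sigma_2(G)\geq \frac{n}{\delta}+\delta-1$, then $\pi_2(G)\geq n-\delta$. Furthermore, if $\pi_2(G)\geq n-\delta$, then $\sigma^*(G)\geq n$.
   Context: $\sigma_2(G)=\min\{d_G(u)+d_G(v): u\neq v,\ uv\notin E(G)\}$ and $\pi_2(G)=\min\{d_G(u)d_G(v): u\neq v,\ uv\notin E(G)\}$, both defined to be $+\infty$ if $G$ is complete. For an independent set $I$ of $G$, $\delta_G(I)=\min\{d_G(u):u\in I\}$, $w_G(I)=\sum_{u\in I}d_G(u)$; $I$ is large if $|I|\ge\delta_G(I)+1$. $\sigma^*(G)=\min\{w_G(I): I \text{ a large independent set of } G\}$, or $+\infty$ if there is no large independent set. *)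

From mathcomp Require Import all_boot all_order all_algebra.
Set Implicit Arguments. Unset Strict Implicit. Unset Printing Implicit Defensive.
Import Order.TTheory GRing.Theory Num.Theory.

Section Graph.
Variables (T : finType) (e : rel T).

Definition simple_graph : Prop := symmetric e /\ irreflexive e.

Definition deg (u : T) : nat := #|[set v | e u v]|.

Definition is_min_degree (delta : nat) : Prop :=
  (exists u, deg u = delta) /\ (forall u, delta <= deg u).

Definition independent (I : {set T}) : bool :=
  [forall u in I, forall v in I, ~~ e u v].

(* delta_G(I) = min_{u in I} d_G(u); I is large iff |I| >= delta_G(I) + 1,
   i.e. iff some u in I has d_G(u) + 1 <= |I| (min over nonempty I). *)
Definition large (I : {set T}) : bool :=
  [exists u in I, deg u + 1 <= #|I|].

Definition weight (I : {set T}) : nat := \sum_(u in I) deg u.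

(* sigma_2(G) >= b   (b rational); vacuous if G complete (sigma_2 = +oo) *)
Definition sigma2_ge (b : rat) : Prop :=
  forall u v, u != v -> ~~ e u v -> (b <= ((deg u + deg v)%:R : rat))%R.

Definition pi2_ge (b : int) : Prop :=
  forall u v, u != v -> ~~ e u v -> (b <= ((deg u * deg v)%:Z : int))%R.

Definition sigma_star_ge (b : nat) : Prop :=
  forall I : {set T}, independent I -> large I -> b <= weight I.

End Graph.

From mathcomp Require Import all_boot all_order all_algebra.
From mathcomp Require Import zify ring.
Import Order.TTheory GRing.Theory Num.Theory.
Local Open Scope ring_scope.

(** For non-adjacent u, v of degrees a, b >= delta, the sigma_2 bound says
    delta (a + b) >= n + delta^2 - delta, and (a - delta)(b - delta) >= 0 turns
    this into ab >= n - delta.  For a large independent set I with a vertex u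
    of degree k <= |I| - 1, the pi_2 bound gives k d(v) >= n - delta for each
    of the at least k other vertices v of I, so their degrees sum to at least
    n - delta, and adding d(u) >= delta yields w(I) >= n. *)

Lemma sigma2_boundE (n d s : nat) : (0 < d)%N ->
  ((n%:R / d%:R + d%:R - 1 : rat) <= s%:R) = (n + d * d <= d * s + d)%N.
Proof.
move=> d_gt0; have d_pos : (0 : rat) < d%:R by rewrite ltr0n.
rewrite -(ler_pM2l d_pos) -(lerD2r d%:R).
have -> : d%:R * (n%:R / d%:R + d%:R - 1) + d%:R = (n + d * d)%:R :> rat.
  by rewrite natrD natrM; field; rewrite pnatr_eq0 -lt0n.
by rewrite -natrM -natrD ler_nat.
Qed.

Lemma leq_mulD_prod {d a b : nat} :
  (d <= a -> d <= b -> d * (a + b) <= a * b + d * d)%N.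
Proof. by move=> da db; nia. Qed.

Lemma leq_sum_scaled (I : finType) (A : {pred I}) (f : I -> nat) (k m : nat) :
  (0 < k)%N -> (k <= #|A|)%N -> (forall i, i \in A -> m <= k * f i)%N ->
  (m <= \sum_(i in A) f i)%N.
Proof.
move=> k_gt0 k_le_A m_le; rewrite -(leq_pmul2l k_gt0) big_distrr /=.
apply: (@leq_trans (\sum_(i in A) m)); last exact: leq_sum.
by rewrite sum_nat_const leq_mul.
Qed.

Lemma independent_nonedge {T : finType} {e : rel T} {I : {set T}} {u v : T} :
  independent e I -> u \in I -> v \in I -> ~~ e u v.
Proof.
move=> /forallP /(_ u) /implyP indI uI vI.
by move/forallP/(_ v): (indI uI); rewrite vI.
Qed.

Section MinDegree.
Variables (T : finType) (e : rel T) (delta : nat).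
Hypotheses (deg_ge : forall u, (delta <= deg e u)%N) (delta_gt0 : (0 < delta)%N).

Lemma pi2_ge_of_sigma2_ge :
  sigma2_ge e ((#|T|%:R : rat) / delta%:R + delta%:R - 1) ->
  pi2_ge e (#|T|%:Z - delta%:Z).
Proof.
move=> sigma2 u v uv nuv.
have := sigma2 u v uv nuv; rewrite sigma2_boundE // => sum_bound.
have := leq_mulD_prod (deg_ge u) (deg_ge v).
lia.
Qed.

Lemma sigma_star_ge_of_pi2_ge :
  pi2_ge e (#|T|%:Z - delta%:Z) -> sigma_star_ge e #|T|.
Proof.
move=> pi2 I indI /existsP[u /andP[uI large_u]].
have u_ge := deg_ge u.
have prod_ge v : v \in I :\ u -> (#|T| - delta <= deg e u * deg e v)%N.
  rewrite in_setD1 => /andP[vu vI].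
  have := pi2 u v; rewrite eq_sym vu (independent_nonedge indI uI vI).
  by move=> /(_ isT isT); lia.
have sum_ge : (#|T| - delta <= \sum_(v in I :\ u) deg e v)%N.
  apply: leq_sum_scaled prod_ge; first exact: leq_trans delta_gt0 u_ge.
  by move: large_u; rewrite (cardsD1 u I) uI; lia.
rewrite /weight (big_setD1 u uI) /=.
(* The two [#|T|] are elaborated through different coercions; lia needs one atom. *)
set n := #|T| in sum_ge *.
lia.
Qed.

End MinDegree.

Theorem proposition1p6 (T : finType) (e : rel T) (delta : nat) :
  simple_graph e -> is_min_degree e delta -> (1 <= delta)%N ->
  (sigma2_ge e ((#|T|%:R : rat) / (delta%:R) + (delta%:R) - 1) ->
     pi2_ge e ((#|T|%:Z) - (delta%:Z)))
  /\
  (pi2_ge e ((#|T|%:Z) - (delta%:Z)) -> sigma_star_ge e #|T|).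
Proof.
move=> _ [_ deg_ge] delta_gt0; split.
- exact: pi2_ge_of_sigma2_ge.
- exact: sigma_star_ge_of_pi2_ge.
Qed.
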